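(* The all-one vector $\mathbf 1=(1)_{t\in\mathbb F_{3^{2m}}}$ belongs to $\mathcal C_3(\mathbb D_d)$.
   Context: Let $m\ge 2$ be an integer. For $s\in\{m,2m\}$ let $\mathrm{Tr}_s:\mathbb F_{3^s}\to\mathbb F_3$ denote the absolute trace. Vectors in $\mathbb F_3^{3^{2m}}$ are indexed by $\mathbb F_{3^{2m}}$, and a function $f:\mathbb F_{3^{2m}}\to\mathbb F_3$ is identified with $(f(t))_{t\in\mathbb F_{3^{2m}}}$. Let $\mathcal C(2m,3)=\{(\mathrm{Tr}_{2m}(at^{3^m+1}+bt)+h)_{t\in\mathbb F_{3^{2m}}}: a\in\mathbb F_{3^m}, b\in\mathbb F_{3^{2m}}, h\in\mathbb F_3\}$, let $d$ be its minimum nonzero Hamming weight, let $\mathbb D_d$ be the incidence structure on $\mathbb F_{3^{2m}}$ whose blocks are the supports of the weight-$d$ codewords, and let $\mathcal C_3(\mathbb D_d)$ be the $\mathbb F_3$-span of the incidence vectors of the blocks (entry $1$ on the block, $0$ elsewhere). *)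

From mathcomp Require Import all_boot all_order all_algebra all_field.
Set Implicit Arguments. Unset Strict Implicit. Unset Printing Implicit Defensive.
Import GRing.Theory.
Local Open Scope ring_scope.

Section Defs.
Variables (F : finFieldType) (m : nat).

(* absolute trace F_{3^n} -> F_3, computed inside F: x + x^3 + ... + x^(3^(n-1)) *)
Definition abs_trace (n : nat) (x : F) : F := \sum_(i < n) x ^+ (3 ^ i).

(* identification of the prime subfield {0,1,2}%:R of F (char 3) with 'F_3 *)
Definition toF3 (x : F) : 'F_3 := odflt 0 [pick k : 'F_3 | ((k : nat)%:R : F) == x].

Definition in_sub (a : F) : bool := a ^+ (3 ^ m) == a.

Definition codeword (a b : F) (h : 'F_3) : {ffun F -> 'F_3} :=
  [ffun t => toF3 (abs_trace (2 * m) (a * t ^+ (3 ^ m + 1) + b * t)) + h].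

Definition code : {set {ffun F -> 'F_3}} :=
  [set c | [exists a : F, exists b : F, exists h : 'F_3,
             in_sub a && (c == codeword a b h)]].

Definition wt (c : {ffun F -> 'F_3}) : nat := #|[set t | c t != 0]|.

Definition min_wt : nat := \big[minn/#|F|]_(c in code | c != 0) wt c.

Definition supp (c : {ffun F -> 'F_3}) : {set F} := [set t | c t != 0].

Definition blocks : {set {set F}} :=
  [set supp c | c in [set c in code | (c != 0) && (wt c == min_wt)]].

Definition incvec (B : {set F}) : {ffun F -> 'F_3} := [ffun t => (t \in B)%:R].

(* membership in C_3(D_d) = F_3-span of incidence vectors of blocks
   (linear combination written coordinatewise) *)
Definition in_C3Dd (v : {ffun F -> 'F_3}) : Prop :=
  exists lam : {set F} -> 'F_3,
    forall t : F, v t = \sum_(B in blocks) lam B * incvec B t.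

End Defs.

From mathcomp Require Import all_boot all_order all_algebra all_field.
From mathcomp Require Import ring zify.
Set Implicit Arguments. Unset Strict Implicit. Unset Printing Implicit Defensive.
Import GRing.Theory Order.TTheory.
Local Open Scope ring_scope.

(* Write q = 3^m, N(t) = t^(q+1) for the norm onto F_q, T for the
   absolute trace of F_{q^2} and U = F_q^*.
   1. Counting: T takes each value of F_3 exactly q/3 = 3^(m-1) times on F_q,
      and N has fibres of size q+1 over U; hence #{t | T(aN(t)) = w} equals
      3^(m-1)(q+1) for a in U and w <> 0.
   2. Completing the square, t |-> t + (b/a)^q turns T(aN(t) + bt) into
      T(aN(t)) + const, so every nonzero codeword has at most 3^(m-1)(q+1)
      zeros; the codewords c_a = T(aN(t)) + 2 attain this bound.  Hence
      d = q^2 - 3^(m-1)(q+1) and the supports B_a = {t | T(aN(t)) <> 1},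
      a in U, are blocks of D_d.
   3. For each t, the number of a in U with t in B_a is q - 1 or
      q - 1 - 3^(m-1), both congruent to -1 mod 3; so the all-one vector is
      minus the sum of the incidence vectors of the B_a (counted with
      multiplicity). *)

Lemma card_fibers (I J : finType) (A : {set I}) (Q : {set J}) (p : I -> J) :
  (forall i, i \in A -> p i \in Q) ->
  #|A| = (\sum_(y in Q) #|[set i in A | p i == y]|)%N.
Proof.
move=> hp; rewrite -sum1_card (partition_big p (mem Q)) //=.
by apply: eq_bigr => y _; rewrite sum1dep_card.
Qed.

Lemma sum_eq_upper_bound (I : finType) (A : {set I}) (f : I -> nat) (B : nat) :
  (forall i, i \in A -> f i <= B)%N -> (#|A| * B <= \sum_(i in A) f i)%N ->
  forall i, i \in A -> f i = B.
Proof.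
move=> hle hge i iA; apply/eqP; rewrite eqn_leq hle //=.
have hrest : (\sum_(j in A | j != i) f j <= \sum_(j in A | j != i) B)%N.
  by apply: leq_sum => j /andP[jA _]; apply: hle.
move: hge; rewrite -sum_nat_const (bigD1 i) //= [X in (_ <= X)%N](bigD1 i) //=.
move=> hge; rewrite -(leq_add2r (\sum_(j in A | j != i) f j)).
by apply: leq_trans hge; rewrite leq_add2l.
Qed.

Lemma card_preim (I : finType) (f : I -> I) (P : pred I) : injective f ->
  #|[set i | P (f i)]| = #|[set i | P i]|.
Proof.
move=> inj; rewrite -(card_preimset [set i | P i] inj).
by apply: eq_card => i; rewrite !inE.
Qed.

Lemma sum_by_multiplicity (R : pzRingType) (I J : finType) (A : {set I})
    (Bs : {set J}) (f : I -> J) (g : J -> R) :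
  (forall a, a \in A -> f a \in Bs) ->
  \sum_(B in Bs) (#|[set a in A | f a == B]|)%:R * g B = \sum_(a in A) g (f a).
Proof.
move=> hf; rewrite [RHS](partition_big f (mem Bs)) //=.
apply: eq_bigr => B _.
rewrite (eq_bigr (fun _ => g B)); last by move=> a /andP[_ /eqP->].
rewrite (eq_bigl (mem [set a in A | f a == B])); last by move=> a; rewrite !inE.
by rewrite sumr_const mulr_natl.
Qed.

Lemma sum_shift (V : zmodType) (n : nat) (f : nat -> V) : f n = f 0%N ->
  \sum_(i < n) f i.+1 = \sum_(i < n) f i.
Proof.
move=> hn.
have := etrans (esym (@big_ord_recr V 0 +%R n (fun i : 'I_n.+1 => f i)))
               (@big_ord_recl V 0 +%R n (fun i : 'I_n.+1 => f i)).
by rewrite /= hn addrC => /addrI.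
Qed.

Section RootCounting.
Variable F : finFieldType.

Lemma card_roots_lt (p : {poly F}) (A : {set F}) :
  p != 0 -> (forall x, x \in A -> root p x) -> (#|A| < size p)%N.
Proof.
move=> p0 hA; rewrite cardE; apply: max_poly_roots => //; last exact: enum_uniq.
by apply/allP => x; rewrite mem_enum; apply: hA.
Qed.

Definition frob_sum_poly (k : nat) : {poly F} := \sum_(i < k) 'X^(3 ^ i).

Lemma size_frob_sum_poly k : size (frob_sum_poly k.+1) = (3 ^ k).+1.
Proof.
elim: k => [|k IH]; first by rewrite /frob_sum_poly big_ord1 expn0 size_polyXn.
rewrite /frob_sum_poly big_ord_recr /= -/(frob_sum_poly k.+1) addrC.
by rewrite size_polyDl size_polyXn // IH ltnS ltn_exp2l.
Qed.

Lemma horner_frob_sum_poly k x :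
  (frob_sum_poly k).[x] = \sum_(i < k) x ^+ (3 ^ i).
Proof. by rewrite horner_sum; apply: eq_bigr => i _; rewrite hornerXn. Qed.

Lemma frob_sum_fiber_le (k : nat) (c w : F) (A : {set F}) : c != 0 ->
  (#|[set x in A | (c * \sum_(i < k.+1) x ^+ (3 ^ i) == w)%R]| <= 3 ^ k)%N.
Proof.
move=> c0.
have sz : size (c *: frob_sum_poly k.+1 - w%:P) = (3 ^ k).+1.
  rewrite size_polyDl size_scale // size_frob_sum_poly // size_polyN ltnS.
  by apply: leq_trans (size_polyC_leq1 _) _; rewrite expn_gt0.
rewrite -ltnS -sz; apply: card_roots_lt; first by rewrite -size_poly_eq0 sz.
move=> x; rewrite inE => /andP[_ /eqP e].
by rewrite /root !hornerE horner_frob_sum_poly e subrr.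
Qed.

End RootCounting.

Section CharThree.
Variable F : finFieldType.
Hypothesis char3 : 3%N \in [pchar F].

(* Every power of 3 is a [pchar F]-number, so x |-> x^(3^e) is additive. *)
Lemma pnat_pow3 e : [pchar F].-nat (3 ^ e)%N.
Proof. by rewrite pnatX (pnatE _ (isT : prime 3)) char3. Qed.

Lemma frobD e (x y : F) : (x + y) ^+ (3 ^ e) = x ^+ (3 ^ e) + y ^+ (3 ^ e).
Proof. exact: exprDn_pchar (pnat_pow3 e). Qed.

Lemma cubeN (x : F) : (- x) ^+ 3 = - x ^+ 3.
Proof. exact: exprNn_pchar (pnat_pow3 1). Qed.

Lemma cube_sum (n : nat) (f : 'I_n -> F) :
  (\sum_(i < n) f i) ^+ 3 = \sum_(i < n) f i ^+ 3.
Proof.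
rewrite -(pFrobenius_autE char3) rmorph_sum.
by apply: eq_bigr => i _; exact: pFrobenius_autE.
Qed.

Lemma cube_fixedB (x y : F) : x ^+ 3 = x -> y ^+ 3 = y -> (x - y) ^+ 3 = x - y.
Proof.
by move=> hx hy; rewrite (frobD 1) cubeN hx hy.
Qed.

Lemma natF_eq0 k : ((k%:R : F) == 0) = (3 %| k)%N.
Proof. by rewrite (dvdn_pcharf char3). Qed.

Lemma two_eqN1 : (2%:R : F) = -1.
Proof. by apply/eqP; rewrite -subr_eq0 opprK -(natrD F 2 1) natF_eq0. Qed.

Lemma cube_cases (z : F) : z ^+ 3 = z -> [\/ z = 0, z = 1 | z = 2%:R].
Proof.
move=> h.
have e : z * (z - 1) * (z + 1) = 0.
  have -> : z * (z - 1) * (z + 1) = z ^+ 3 - z by ring.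
  by rewrite h subrr.
move/eqP: e; rewrite !mulf_eq0 subr_eq0 addr_eq0 -two_eqN1.
by case/orP => [/orP[]|] /eqP ->; [constructor 1|constructor 2|constructor 3].
Qed.

Lemma natF_inj3 (i j : nat) : (i < 3)%N -> (j < 3)%N -> (i%:R : F) = j%:R -> i = j.
Proof.
wlog le_ij : i j / (i <= j)%N.
  by move=> W hi hj e; case/orP: (leq_total i j) => H; [|apply/esym]; apply: W.
move=> hi hj /eqP; rewrite eq_sym -subr_eq0 -natrB // natF_eq0; lia.
Qed.

Lemma two_neq0 : (2%:R : F) != 0.
Proof. by rewrite natF_eq0. Qed.

Lemma two_neq1 : (2%:R : F) != 1.
Proof. by apply/eqP => /(natF_inj3 (isT : (2 < 3)%N) (isT : (1 < 3)%N)). Qed.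

Lemma toF3_nat (k : 'F_3) : toF3 ((k : nat)%:R : F) = k.
Proof.
rewrite /toF3; case: pickP => [j /eqP hj | /(_ k)]; last by rewrite eqxx.
by apply: val_inj; apply: natF_inj3 hj; [exact: ltn_ord | exact: ltn_ord].
Qed.

Definition neg_lift (h : 'F_3) : F := - (h : nat)%:R.

Lemma neg_lift_cube h : neg_lift h ^+ 3 = neg_lift h.
Proof.
have nat_cube k : (k%:R : F) ^+ 3 = k%:R.
  by rewrite -(pFrobenius_autE char3); exact: rmorph_nat.
by rewrite /neg_lift cubeN nat_cube.
Qed.

Lemma toF3_add_eq0 (z : F) (h : 'F_3) : z ^+ 3 = z ->
  (toF3 z + h == 0) = (z == neg_lift h).
Proof.
move=> /cube_cases hz.
have [k ->] : exists k : 'F_3, z = (k : nat)%:R.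
  by case: hz => ->; [exists 0 | exists 1 | exists 2%:R].
rewrite toF3_nat /neg_lift eq_sym -addr_eq0 -natrD natF_eq0.
by case: k h => [[|[|[|k]]] ?] // [[|[|[|h]]] ?].
Qed.

Lemma card_by_cube_value (I : finType) (A : {set I}) (g : I -> F) :
  (forall x, g x ^+ 3 = g x) ->
  #|A| = (#|[set x in A | (g x == 0)%R]| + #|[set x in A | (g x == 1)%R]|
          + #|[set x in A | (g x == 2%:R)%R]|)%N.
Proof.
move=> hg; rewrite (@card_fibers _ _ A (0 |: (1 |: [set 2%:R])) g); last first.
  by move=> x _; case: (cube_cases (hg x)) => ->; rewrite !inE eqxx ?orbT.
rewrite !big_setU1 /= ?big_set1 ?addnA //; first by rewrite inE eq_sym two_neq1.
by rewrite !inE negb_or eq_sym oner_neq0 eq_sym two_neq0.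
Qed.

End CharThree.

Arguments neg_lift {F} h.

Section Trace.
Variables (F : finFieldType) (n : nat).
Hypothesis hF : #|F| = (3 ^ n)%N.
Local Notation T := (@abs_trace F n).
Let char3 : 3%N \in [pchar F] := card_finPcharP hF (isT : prime 3).

Lemma trace_add x y : T (x + y) = T x + T y.
Proof.
rewrite /abs_trace -big_split.
by apply: eq_bigr => i _; rewrite frobD.
Qed.

Lemma trace0 : T 0 = 0.
Proof. by rewrite /abs_trace big1 // => i _; rewrite expr0n expn_eq0. Qed.

(* T is invariant under the Frobenius, because x^(3^n) = x. *)
Lemma trace_frob x : T (x ^+ 3) = T x.
Proof.
rewrite /abs_trace.
rewrite (eq_bigr (fun i : 'I_n => x ^+ (3 ^ i.+1))); last first.
  by move=> i _; rewrite -exprM -expnS.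
apply: (@sum_shift F n (fun i => x ^+ (3 ^ i))).
by rewrite -hF expf_card expr1.
Qed.

Lemma trace_frobn e x : T (x ^+ (3 ^ e)) = T x.
Proof. by elim: e => [|e IH]; rewrite ?expr1 // expnSr exprM trace_frob. Qed.

(* Hence T takes values in the prime field. *)
Lemma trace_cube x : T x ^+ 3 = T x.
Proof.
rewrite -[RHS]trace_frob /abs_trace cube_sum //.
by apply: eq_bigr => i _; rewrite -!exprM mulnC.
Qed.

(* T is a nonzero polynomial map of degree 3^(n-1). *)
Lemma trace_fiber_le w : (0 < n)%N -> (#|[set x | T x == w]| <= 3 ^ n.-1)%N.
Proof.
move=> n_gt0.
have -> : [set x | T x == w] =
    [set x in [set: F] | 1 * \sum_(i < n.-1.+1) x ^+ (3 ^ i) == w].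
  by apply/setP => x; rewrite !inE mul1r prednK.
exact: frob_sum_fiber_le (oner_neq0 F).
Qed.

End Trace.

Section Subfield.
Variables (F : finFieldType) (m : nat).
Hypothesis hm : (2 <= m)%N.
Hypothesis hF : #|F| = (3 ^ (2 * m))%N.
Let char3 : 3%N \in [pchar F] := card_finPcharP hF (isT : prime 3).
Local Notation T := (@abs_trace F (2 * m)).

Definition q : nat := 3 ^ m.
Definition Fq : {set F} := [set x | in_sub m x].
Definition U : {set F} := Fq :\ 0.
Definition Nm (t : F) : F := t ^+ (q + 1).

Lemma inFq x : (x \in Fq) = (x ^+ q == x).
Proof. by rewrite inE. Qed.

Lemma inU a : (a \in U) = (a != 0) && (a ^+ q == a).
Proof. by rewrite !inE. Qed.

Lemma U_sub_Fq a : a \in U -> a \in Fq.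
Proof. by rewrite in_setD1 => /andP[]. Qed.

Lemma card_F : #|F| = (q * q)%N.
Proof. by rewrite hF /q -expnD addnn -mul2n. Qed.

Lemma q_gt1 : (1 < q)%N.
Proof. by rewrite /q -{1}(expn0 3) ltn_exp2l //; apply: leq_trans hm. Qed.

Lemma q_eq3 : q = (3 * 3 ^ m.-1)%N.
Proof. by rewrite /q -expnS prednK // ltnW. Qed.

Lemma frob_qq (x : F) : x ^+ (q * q) = x.
Proof. by rewrite -card_F expf_card. Qed.

Lemma zero_in_Fq : (0 : F) \in Fq.
Proof. by rewrite inFq expr0n /q expn_eq0. Qed.

Lemma Fq_mul x y : x \in Fq -> y \in Fq -> x * y \in Fq.
Proof. by rewrite !inFq exprMn => /eqP-> /eqP->. Qed.

Lemma Fq_inv x : x \in Fq -> x^-1 \in Fq.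
Proof. by rewrite !inFq exprVn => /eqP->. Qed.

Lemma norm_in_Fq t : Nm t \in Fq.
Proof. by rewrite inFq /Nm -exprM mulnDl mul1n exprD frob_qq addn1 exprS. Qed.

(* F_q is the root set of X^q - X. *)
Lemma card_Fq_le : (#|Fq| <= q)%N.
Proof.
have sz : size ('X^q - 'X : {poly F}) = q.+1.
  by rewrite size_polyDl size_polyXn // size_polyN size_polyX ltnS q_gt1.
rewrite -ltnS -sz; apply: card_roots_lt; first by rewrite -size_poly_eq0 sz.
by move=> x; rewrite inFq /root !hornerE => /eqP->; rewrite subrr.
Qed.

(* A nonzero norm fibre is the root set of X^(q+1) - y. *)
Lemma norm_fiber_le y : y != 0 -> (#|[set t | Nm t == y]| <= q + 1)%N.
Proof.
move=> y0; have sz : size ('X^(q + 1) - y%:P : {poly F}) = (q + 1).+1.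
  by rewrite size_XnsubC // addn1.
rewrite -ltnS -sz; apply: card_roots_lt; first by rewrite -size_poly_eq0 sz.
by move=> x; rewrite inE /Nm /root !hornerE => /eqP->; rewrite subrr.
Qed.

Lemma norm_fiber0 : [set t | Nm t == 0] = [set 0].
Proof. by apply/setP => t; rewrite !inE /Nm expf_eq0 addn1. Qed.

Lemma card_Fq_U : #|Fq| = #|U|.+1.
Proof. by rewrite (cardsD1 0) zero_in_Fq. Qed.

Lemma norm_partition :
  (q * q - 1 = \sum_(y in U) #|[set t | Nm t == y]|)%N.
Proof.
have -> : (q * q - 1 = #|[set~ (0 : F)%R]|)%N by rewrite cardsC1 card_F subn1.
rewrite (@card_fibers _ _ _ U Nm); last first.
  move=> t; rewrite in_setC1 => t0; rewrite in_setD1 norm_in_Fq andbT.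
  exact: expf_neq0.
apply: eq_bigr => y; rewrite in_setD1 => /andP[y0 _].
apply: eq_card => t; rewrite !inE andb_idl // => /eqP ht.
by apply: contra y0 => /eqP t0; rewrite -ht t0 /Nm expr0n addn1.
Qed.

(* The upper bounds q - 1 and q + 1 are attained, since (q-1)(q+1) = q^2-1. *)
Lemma card_U : #|U| = (q - 1)%N.
Proof.
have hsum : (q * q - 1 <= #|U| * (q + 1))%N.
  rewrite norm_partition -sum_nat_const; apply: leq_sum => y.
  by rewrite in_setD1 => /andP[y0 _]; exact: norm_fiber_le.
have hU : (#|U| <= q - 1)%N.
  by move: card_Fq_le; rewrite card_Fq_U; lia.
have := q_gt1; nia.
Qed.

Lemma norm_fiber_card y : y \in U -> #|[set t | Nm t == y]| = (q + 1)%N.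
Proof.
move=> yU.
apply: (@sum_eq_upper_bound _ U (fun y => #|[set t | Nm t == y]|)) yU => [z|].
  by rewrite in_setD1 => /andP[z0 _]; exact: norm_fiber_le.
rewrite -norm_partition card_U; have := q_gt1; nia.
Qed.

Lemma card_Fq : #|Fq| = q.
Proof. by rewrite card_Fq_U card_U; have := q_gt1; lia. Qed.

Lemma trace_Fq y : y \in Fq -> T y = 2%:R * \sum_(i < m) y ^+ (3 ^ i).
Proof.
rewrite inFq => /eqP hy.
rewrite /abs_trace mul2n -addnn big_split_ord /= mulr_natl mulr2n.
by congr (_ + _); apply: eq_bigr => i _; rewrite expnD exprM hy.
Qed.

Lemma Fq_trace_fiber_le w : (#|[set y in Fq | T y == w]| <= 3 ^ m.-1)%N.
Proof.
have -> : [set y in Fq | T y == w] =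
    [set y in Fq | (2%:R * \sum_(i < m.-1.+1) y ^+ (3 ^ i) == w)%R].
  apply/setP => y; rewrite !inE; case yq: (in_sub m y) => //=.
  by rewrite trace_Fq ?inE // prednK // ltnW.
exact: frob_sum_fiber_le (two_neq0 char3).
Qed.

Lemma Fq_trace_fiber w : w ^+ 3 = w ->
  #|[set y in Fq | T y == w]| = (3 ^ m.-1)%N.
Proof.
have := card_by_cube_value char3 Fq (trace_cube hF); rewrite card_Fq q_eq3.
have h0 := Fq_trace_fiber_le 0; have h1 := Fq_trace_fiber_le 1.
have h2 := Fq_trace_fiber_le 2%:R.
by move=> hsum /(cube_cases char3) [] ->; lia.
Qed.

(* Multiplication by a in U permutes F_q. *)
Lemma scale_Fq a (P : pred F) : a \in U ->
  #|[set y in Fq | P (a * y)]| = #|[set y in Fq | P y]|.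
Proof.
rewrite in_setD1 => /andP[a0 aq].
rewrite -(card_imset _ (mulfI a0)).
suff -> : [set a * y | y in [set y in Fq | P (a * y)]] = [set y in Fq | P y] by [].
apply/setP => z; rewrite inE; apply/imsetP/andP => [[y] | [zq Pz]].
  by rewrite inE => /andP[yq Py] ->; split; first exact: Fq_mul.
exists (a^-1 * z); last by rewrite mulVKf.
by rewrite inE mulVKf // Pz andbT; exact: Fq_mul (Fq_inv aq) zq.
Qed.

Lemma Fq_trace_fiber_scaled a w : a \in U -> w ^+ 3 = w ->
  #|[set y in Fq | T (a * y) == w]| = (3 ^ m.-1)%N.
Proof. by move=> aU hw; rewrite (scale_Fq (fun z => T z == w) aU) Fq_trace_fiber. Qed.

Lemma card_trace_norm_sum a w :
  #|[set u | T (a * Nm u) == w]| =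
  (\sum_(y in [set y in Fq | (T (a * y) == w)%R]) #|[set t | Nm t == y]|)%N.
Proof.
rewrite (@card_fibers _ _ _ [set y in Fq | T (a * y) == w] Nm); last first.
  by move=> t; rewrite inE [Nm t \in _]inE norm_in_Fq.
apply: eq_bigr => y; rewrite inE => /andP[_ /eqP hy].
by apply: eq_card => t; rewrite !inE andb_idl // => /eqP ->; rewrite hy.
Qed.

Lemma norm_fiber_Fq_le y : y \in Fq -> (#|[set t | Nm t == y]| <= q + 1)%N.
Proof.
move=> yq; have [-> | y0] := eqVneq y 0; first by rewrite norm_fiber0 cards1 addn1.
by rewrite norm_fiber_card // in_setD1 y0.
Qed.

Lemma card_trace_norm_le a w : a \in U -> w ^+ 3 = w ->
  (#|[set u | (T (a * Nm u) == w)%R]| <= 3 ^ m.-1 * (q + 1))%N.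
Proof.
move=> aU hw; rewrite card_trace_norm_sum -(Fq_trace_fiber_scaled aU hw).
rewrite -sum_nat_const; apply: leq_sum => y.
by rewrite inE => /andP[yq _]; apply: norm_fiber_Fq_le.
Qed.

(* For w <> 0 the value y = N(u) is nonzero, so every fibre has size q + 1. *)
Lemma card_trace_norm a w : a \in U -> w ^+ 3 = w -> w != 0 ->
  #|[set u | T (a * Nm u) == w]| = (3 ^ m.-1 * (q + 1))%N.
Proof.
move=> aU hw w0; rewrite card_trace_norm_sum -(Fq_trace_fiber_scaled aU hw).
rewrite -sum_nat_const; apply: eq_bigr => y; rewrite inE => /andP[yq /eqP hy].
rewrite norm_fiber_card // in_setD1 yq andbT.
by apply: contra w0 => /eqP y0; rewrite -hy y0 mulr0 trace0.
Qed.

(* Completing the square: the translation u |-> u + (b/a)^q turns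
   T(a N(u) + b u) into T(a N(u)) plus a constant. *)
Lemma trace_complete_square a b : a \in U -> exists c, forall u,
  T (a * Nm (u + c) + b * (u + c)) = T (a * Nm u) + T (a * Nm c + b * c).
Proof.
rewrite inU => /andP[a0 /eqP haq].
exists ((b / a) ^+ q) => u; set c := (b / a) ^+ q.
have hcq : c ^+ q = b / a by rewrite -exprM frob_qq.
have hb : b = a * c ^+ q by rewrite hcq mulrC divfK.
have hN : Nm (u + c) = Nm u + c * u ^+ q + c ^+ q * u + Nm c.
  by rewrite /Nm !addn1 !exprSr /q frobD //; ring.
(* the cross term a c u^q is conjugate to b u *)
have hcross : T (a * c * u ^+ q) = T (b * u).
  rewrite -[LHS](trace_frobn hF m) -/q !exprMn haq hcq -exprM frob_qq.
  by rewrite [a * _]mulrC divfK.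
have h3 : b * u + 2%:R * (b * u) = 0.
  by rewrite mulr_natl -mulrS -mulr_natr (pcharf0 char3) mulr0.
have -> : a * Nm (u + c) + b * (u + c) =
    a * Nm u + (a * c * u ^+ q + 2%:R * (b * u)) + (a * Nm c + b * c).
  by rewrite hN hb; ring.
by rewrite !(trace_add hF) hcross -(trace_add hF) h3 trace0 addr0.
Qed.

Definition zeros a b (h : 'F_3) : {set F} :=
  [set t | T (a * Nm t + b * t) == neg_lift h].

Lemma codeword_neq0 a b h t :
  (codeword m a b h t != 0) = (T (a * Nm t + b * t) != neg_lift h).
Proof. by rewrite ffunE (toF3_add_eq0 char3) // (trace_cube hF). Qed.

Lemma wt_codeword a b h : wt (codeword m a b h) = (#|F| - #|zeros a b h|)%N.
Proof.
rewrite -(cardsC (zeros a b h)) addKn.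
by apply: eq_card => t; rewrite !inE codeword_neq0.
Qed.

Lemma card_zeros_affine_le b h : codeword m 0 b h != 0 ->
  (#|zeros 0 b h| <= 3 ^ m.-1 * (q + 1))%N.
Proof.
move=> cw0; have [b0 | b0] := eqVneq b 0.
  have [e0 | e0] := eqVneq (neg_lift h : F) 0.
    case/eqP: cw0; apply/ffunP => t; rewrite [RHS]ffunE; apply/eqP.
    by rewrite -[_ == _]negbK codeword_neq0 b0 !mul0r addr0 trace0 e0 eqxx.
  rewrite (_ : zeros 0 b h = set0) ?cards0 //; apply/setP => t.
  by rewrite !inE b0 !mul0r addr0 trace0 eq_sym (negbTE e0).
rewrite /zeros (eq_card (B := [set t | T (b * t) == neg_lift h])); last first.
  by move=> t; rewrite !inE mul0r add0r.
rewrite (card_preim (fun x => T x == neg_lift h) (mulfI b0)).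
have m2_gt0 : (0 < 2 * m)%N by lia.
apply: leq_trans (trace_fiber_le (neg_lift h) m2_gt0) _.
have -> : (2 * m).-1 = (m.-1 + m)%N by lia.
by rewrite expnD /q leq_mul2l leq_addr orbT.
Qed.

Lemma card_zeros_le a b h : a \in Fq -> codeword m a b h != 0 ->
  (#|zeros a b h| <= 3 ^ m.-1 * (q + 1))%N.
Proof.
move=> aFq cw0; have [a0 | a0] := eqVneq a 0.
  by move: cw0; rewrite a0; exact: card_zeros_affine_le.
have aU : a \in U by rewrite in_setD1 a0.
have [c hc] := trace_complete_square b aU.
rewrite /zeros -(card_preim (fun t => T (a * Nm t + b * t) == neg_lift h) (addIr c)).
have -> : [set t | T (a * Nm (t + c) + b * (t + c)) == neg_lift h] =
          [set t | T (a * Nm t) == neg_lift h - T (a * Nm c + b * c)].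
  apply/setP => t; rewrite !inE hc.
  by apply/eqP/eqP => [<- | ->]; [rewrite addrK | rewrite subrK].
apply: card_trace_norm_le aU _.
by rewrite (cube_fixedB char3) ?(neg_lift_cube char3) ?(trace_cube hF).
Qed.

Definition dmin : nat := (#|F| - 3 ^ m.-1 * (q + 1))%N.

Lemma codeword_in_code a b h : a \in Fq -> codeword m a b h \in code F m.
Proof.
move=> aq; rewrite inE; apply/existsP; exists a; apply/existsP; exists b.
by apply/existsP; exists h; rewrite eqxx andbT; move: aq; rewrite inE.
Qed.

Lemma code_wt_ge c : c \in code F m -> c != 0 -> (dmin <= wt c)%N.
Proof.
rewrite inE => /existsP[a /existsP[b /existsP[h /andP[aq /eqP ->]]]] cw0.
by rewrite wt_codeword leq_sub2l // card_zeros_le // inE.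
Qed.

(* The codewords T(a N(t)) + 2, a in U, vanish exactly where T(a N(t)) = 1. *)
Definition special_cw a : {ffun F -> 'F_3} := codeword m a 0 2%:R.

Lemma neg_lift2 : neg_lift 2%:R = 1 :> F.
Proof. by rewrite /neg_lift /= (two_eqN1 char3) opprK. Qed.

Lemma wt_special_cw a : a \in U -> wt (special_cw a) = dmin.
Proof.
move=> aU; rewrite wt_codeword /dmin /zeros neg_lift2.
rewrite (eq_card (B := [set t | T (a * Nm t) == 1])); last first.
  by move=> t; rewrite !inE mul0r addr0.
by rewrite card_trace_norm // ?expr1n ?oner_neq0.
Qed.

Lemma dmin_gt0 : (0 < dmin)%N.
Proof.
rewrite /dmin card_F q_eq3 subn_gt0.
have : (0 < 3 ^ m.-1)%N by rewrite expn_gt0.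
by move: (3 ^ m.-1)%N => k; nia.
Qed.

Lemma special_cw_neq0 a : a \in U -> special_cw a != 0.
Proof.
move=> aU; apply/eqP => e; have := wt_special_cw aU; rewrite e.
rewrite /wt (eq_card0 (A := [set t | (0 : {ffun F -> 'F_3}) t != 0])).
  by move=> d0; have := dmin_gt0; rewrite -d0.
by move=> t; rewrite inE ffunE eqxx.
Qed.

Lemma min_wt_eq : min_wt F m = dmin.
Proof.
have one_U : (1 : F) \in U by rewrite inU oner_neq0 expr1n eqxx.
apply/eqP; rewrite eqn_leq; apply/andP; split.
  rewrite -(wt_special_cw one_U) /min_wt -minEnat -leEnat; apply: bigmin_le_cond.
  by rewrite codeword_in_code ?U_sub_Fq // special_cw_neq0.
rewrite /min_wt; elim/big_ind: _ => //.
- by rewrite /dmin leq_subr.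
- by move=> x y hx hy; rewrite leq_min hx hy.
- by move=> c /andP[hc c0]; apply: code_wt_ge.
Qed.

Lemma special_block a : a \in U -> supp (special_cw a) \in blocks F m.
Proof.
move=> aU; apply: imset_f.
rewrite inE codeword_in_code ?U_sub_Fq // special_cw_neq0 //=.
by rewrite wt_special_cw // min_wt_eq.
Qed.

(* For fixed y in F_q the number of a in U with T(a y) = 1 is 0 or 3^(m-1). *)
Lemma card_trace_one_mod3 y : y \in Fq ->
  (#|[set a in U | (T (a * y) == 1)%R]| %% 3 = 0)%N.
Proof.
move=> yq; have [y0 | y0] := eqVneq y 0.
  rewrite (_ : [set a in U | _] = set0) ?cards0 //; apply/setP => a.
  by rewrite !inE y0 mulr0 trace0 (eq_sym 0) oner_eq0 andbF.
have yU : y \in U by rewrite in_setD1 y0.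
have -> : #|[set a in U | (T (a * y) == 1)%R]| = #|[set a in Fq | (T (y * a) == 1)%R]|.
  apply: eq_card => a; rewrite !inE mulrC.
  by case: (a =P 0) => [-> | _] //=; rewrite mulr0 trace0 (eq_sym 0) oner_eq0 andbF.
rewrite Fq_trace_fiber_scaled ?expr1n //.
have -> : m.-1 = m.-2.+1 by lia.
by rewrite expnS modnMr.
Qed.

Lemma card_special_blocks_mod3 t :
  (#|[set a in U | (T (a * Nm t) != 1)%R]| %% 3 = 2)%N.
Proof.
have hsplit : (#|[set a in U | (T (a * Nm t) != 1)%R]| +
               #|[set a in U | (T (a * Nm t) == 1)%R]| = q - 1)%N.
  rewrite -card_U -(cardsID [set a | T (a * Nm t) == 1] U) addnC.
  by congr (_ + _)%N; apply: eq_card => a; rewrite !inE;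
    case: (T (a * Nm t) == 1); rewrite ?andbT ?andbF.
have := card_trace_one_mod3 (norm_in_Fq t); move: hsplit; rewrite q_eq3; lia.
Qed.

Lemma special_incidence_sum t :
  \sum_(a in U) incvec (supp (special_cw a)) t = -1.
Proof.
rewrite (eq_bigr (fun a => ((T (a * Nm t) != 1) : nat)%:R)); last first.
  by move=> a _; rewrite ffunE inE codeword_neq0 neg_lift2 mul0r addr0.
rewrite (bigID (fun a => T (a * Nm t) != 1)) /= [X in _ + X]big1; last first.
  by move=> a /andP[_ /negbTE ->].
rewrite addr0 (eq_bigr (fun _ => 1)); last by move=> a /andP[_ ->].
rewrite (eq_bigl (mem [set a in U | T (a * Nm t) != 1])); last first.
  by move=> a; rewrite !inE.
by rewrite sumr_const -(Fp_nat_mod (isT : prime 3)) card_special_blocks_mod3; apply: val_inj.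
Qed.

End Subfield.

Theorem lemma3p4 (F : finFieldType) (m : nat) (hm : (2 <= m)%N)
  (hF : #|F| = (3 ^ (2 * m))%N) :
  in_C3Dd m [ffun _ : F => (1 : 'F_3)].
Proof.
exists (fun B => - (#|[set a in U F m | supp (special_cw m a) == B]|)%:R) => t.
under eq_bigr do rewrite mulNr.
rewrite sumrN (sum_by_multiplicity (fun B => incvec B t) (special_block hm hF)).
by rewrite (special_incidence_sum hm hF) opprK ffunE.
Qed.
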